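(* Let $a=a_0+a_1e_1+a_2e_2+a_3e_3\in C\ell_2$. Define $$a^+=\begin{cases}0,& a=0;\\ \dfrac{\bar a}{H_a},& H_a\neq 0;\\ \dfrac{a'}{4(a_0^2+a_3^2)},& H_a=0\text{ and }a\neq 0.\end{cases}$$ Then $a^+$ is the Moore–Penrose inverse of $a$, i.e. $x=a^+$ satisfies $axa=a$, $xax=x$, $(ax)'=ax$, $(xa)'=xa$.
   Context: $C\ell_2$ is the 4-dimensional real associative algebra with basis $1,e_1,e_2,e_3$ and multiplication $e_1^2=e_2^2=1$, $e_3^2=-1$, $e_1e_2=e_3=-e_2e_1$, $e_1e_3=e_2=-e_3e_1$, $e_3e_2=e_1=-e_2e_3$. For $a=a_0+a_1e_1+a_2e_2+a_3e_3$ ($a_i\in\mathbb{R}$): $\bar a=a_0-a_1e_1-a_2e_2-a_3e_3$, $a'=a_0+a_1e_1+a_2e_2-a_3e_3$, $H_a=a\bar a=a_0^2-a_1^2-a_2^2+a_3^2$. A Moore–Penrose inverse of $a$ is an element $x\in C\ell_2$ with $axa=a$, $xax=x$, $(ax)'=ax$, $(xa)'=xa$. *)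

From Stdlib Require Import Reals.
Open Scope R_scope.

(* a = c0 + c1 e1 + c2 e2 + c3 e3 *)
Record Cl2 : Type := mkCl2 { c0 : R; c1 : R; c2 : R; c3 : R }.

Definition cl_zero : Cl2 := mkCl2 0 0 0 0.

(* multiplication from e1^2 = e2^2 = 1, e3^2 = -1, e1e2 = e3 = -e2e1,
   e1e3 = e2 = -e3e1, e3e2 = e1 = -e2e3, extended bilinearly *)
Definition cl_mul (a b : Cl2) : Cl2 :=
  mkCl2
    (c0 a * c0 b + c1 a * c1 b + c2 a * c2 b - c3 a * c3 b)
    (c0 a * c1 b + c1 a * c0 b + c3 a * c2 b - c2 a * c3 b)
    (c0 a * c2 b + c2 a * c0 b + c1 a * c3 b - c3 a * c1 b)
    (c0 a * c3 b + c3 a * c0 b + c1 a * c2 b - c2 a * c1 b).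

Definition cl_scale (r : R) (a : Cl2) : Cl2 :=
  mkCl2 (r * c0 a) (r * c1 a) (r * c2 a) (r * c3 a).

Definition cl_bar (a : Cl2) : Cl2 := mkCl2 (c0 a) (- c1 a) (- c2 a) (- c3 a).

Definition cl_prime (a : Cl2) : Cl2 := mkCl2 (c0 a) (c1 a) (c2 a) (- c3 a).

(* H_a = a a-bar (a real number) *)
Definition H (a : Cl2) : R :=
  c0 a ^ 2 - c1 a ^ 2 - c2 a ^ 2 + c3 a ^ 2.

Definition is_MP_inverse (a x : Cl2) : Prop :=
  cl_mul (cl_mul a x) a = a /\
  cl_mul (cl_mul x a) x = x /\
  cl_prime (cl_mul a x) = cl_mul a x /\
  cl_prime (cl_mul x a) = cl_mul x a.

Definition cl_plus (a : Cl2) : Cl2 :=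
  match Req_EM_T (c0 a) 0, Req_EM_T (c1 a) 0, Req_EM_T (c2 a) 0,
        Req_EM_T (c3 a) 0 with
  | left _, left _, left _, left _ => cl_zero
  | _, _, _, _ =>
      match Req_EM_T (H a) 0 with
      | right _ => cl_scale (/ H a) (cl_bar a)
      | left _ => cl_scale (/ (4 * (c0 a ^ 2 + c3 a ^ 2))) (cl_prime a)
      end
  end.

From Pilot Require Import Defs.
From Stdlib Require Import Reals Psatz.
Open Scope R_scope.

(* The map [a ↦ a'] is an involutive anti-automorphism of Cl_2, so for
   [x = a' / k] both [a x] and [x a] are fixed by it, and [x a x = x] is the
   image of [a x a = a] under it.  If [H_a <> 0], then [a ā = ā a = H_a] and
   [a^+] is the two-sided inverse of [a].  If [H_a = 0], then
   [a a' a = 4 (a0² + a3²) a], and [a0² + a3² <> 0] unless [a = 0], because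
   [a0 = a3 = 0] and [H_a = 0] force [a1 = a2 = 0]. *)

Definition cl_one : Cl2 := mkCl2 1 0 0 0.

Lemma Cl2_eq_dec (a b : Cl2) : {a = b} + {a <> b}.
Proof. decide equality; apply Req_EM_T. Qed.

Lemma cl_mul_assoc (a b c : Cl2) :
  cl_mul a (cl_mul b c) = cl_mul (cl_mul a b) c.
Proof. destruct a, b, c; unfold cl_mul; simpl; f_equal; ring. Qed.

Lemma cl_mul_1_l (a : Cl2) : cl_mul cl_one a = a.
Proof. destruct a; unfold cl_mul; simpl; f_equal; ring. Qed.

Lemma cl_mul_scale_l (r : R) (a b : Cl2) :
  cl_mul (cl_scale r a) b = cl_scale r (cl_mul a b).
Proof. destruct a, b; unfold cl_mul, cl_scale; simpl; f_equal; ring. Qed.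

Lemma cl_mul_scale_r (r : R) (a b : Cl2) :
  cl_mul a (cl_scale r b) = cl_scale r (cl_mul a b).
Proof. destruct a, b; unfold cl_mul, cl_scale; simpl; f_equal; ring. Qed.

Lemma cl_scale_scale (r s : R) (a : Cl2) :
  cl_scale r (cl_scale s a) = cl_scale (r * s) a.
Proof. destruct a; unfold cl_scale; simpl; f_equal; ring. Qed.

Lemma cl_scale_1 (a : Cl2) : cl_scale 1 a = a.
Proof. destruct a; unfold cl_scale; simpl; f_equal; ring. Qed.

Lemma cl_prime_involutive (a : Cl2) : cl_prime (cl_prime a) = a.
Proof. destruct a; unfold cl_prime; simpl; f_equal; ring. Qed.

Lemma cl_prime_one : cl_prime cl_one = cl_one.
Proof. unfold cl_prime, cl_one; simpl; f_equal; ring. Qed.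

Lemma cl_prime_scale (r : R) (a : Cl2) :
  cl_prime (cl_scale r a) = cl_scale r (cl_prime a).
Proof. destruct a; unfold cl_prime, cl_scale; simpl; f_equal; ring. Qed.

Lemma cl_prime_mul (a b : Cl2) :
  cl_prime (cl_mul a b) = cl_mul (cl_prime b) (cl_prime a).
Proof. destruct a, b; unfold cl_prime, cl_mul; simpl; f_equal; ring. Qed.

Lemma cl_prime_mul_prime (a : Cl2) :
  cl_prime (cl_mul a (cl_prime a)) = cl_mul a (cl_prime a).
Proof. now rewrite cl_prime_mul, cl_prime_involutive. Qed.

Lemma cl_prime_prime_mul (a : Cl2) :
  cl_prime (cl_mul (cl_prime a) a) = cl_mul (cl_prime a) a.
Proof. now rewrite cl_prime_mul, cl_prime_involutive. Qed.

Lemma cl_mul_bar_r (a : Cl2) : cl_mul a (cl_bar a) = cl_scale (H a) cl_one.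
Proof. destruct a; unfold cl_mul, cl_bar, cl_scale, H; simpl; f_equal; ring. Qed.

Lemma cl_mul_bar_l (a : Cl2) : cl_mul (cl_bar a) a = cl_scale (H a) cl_one.
Proof. destruct a; unfold cl_mul, cl_bar, cl_scale, H; simpl; f_equal; ring. Qed.

Lemma cl_mul_prime_mul_null (a : Cl2) :
  H a = 0 ->
  cl_mul (cl_mul a (cl_prime a)) a = cl_scale (4 * (c0 a ^ 2 + c3 a ^ 2)) a.
Proof.
  intros Hnull.
  assert (Hmul : forall x, x * H a = 0) by (intro x; rewrite Hnull; ring).
  destruct a as [a0 a1 a2 a3].
  pose proof (Hmul a0) as h0; pose proof (Hmul a1) as h1;
    pose proof (Hmul a2) as h2; pose proof (Hmul a3) as h3.
  unfold H, cl_mul, cl_prime, cl_scale in *; simpl in *; f_equal; nra.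
Qed.

Lemma null_nonzero_norm_neq0 (a : Cl2) :
  H a = 0 -> a <> cl_zero -> 4 * (c0 a ^ 2 + c3 a ^ 2) <> 0.
Proof.
  destruct a as [a0 a1 a2 a3]; unfold H, cl_zero; simpl; intros Hnull Hnz Hnorm.
  apply Hnz; f_equal; nra.
Qed.

Lemma is_MP_inverse_zero : is_MP_inverse cl_zero cl_zero.
Proof.
  unfold is_MP_inverse, cl_mul, cl_prime, cl_zero; simpl.
  repeat split; f_equal; ring.
Qed.

Lemma is_MP_inverse_inverse (a x : Cl2) :
  cl_mul a x = cl_one -> cl_mul x a = cl_one -> is_MP_inverse a x.
Proof.
  intros Hax Hxa; unfold is_MP_inverse.
  rewrite Hax, Hxa, cl_prime_one, !cl_mul_1_l; auto.
Qed.

Lemma is_MP_inverse_scale_prime (a : Cl2) (k : R) :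
  k <> 0 -> cl_mul (cl_mul a (cl_prime a)) a = cl_scale k a ->
  is_MP_inverse a (cl_scale (/ k) (cl_prime a)).
Proof.
  intros Hk Haa'a.
  assert (Ha'aa' : cl_mul (cl_mul (cl_prime a) a) (cl_prime a)
                   = cl_scale k (cl_prime a)).
  { rewrite <- cl_prime_scale, <- Haa'a, !cl_prime_mul, cl_prime_involutive.
    symmetry; apply cl_mul_assoc. }
  unfold is_MP_inverse.
  rewrite !cl_mul_scale_l, !cl_mul_scale_r, !cl_mul_scale_l, !cl_prime_scale,
    cl_prime_mul_prime, cl_prime_prime_mul, Haa'a, Ha'aa', !cl_scale_scale.
  replace (/ k * k) with 1 by (field; exact Hk).
  replace (/ k * / k * k) with (/ k) by (field; exact Hk).
  rewrite cl_scale_1; auto.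
Qed.

Lemma is_MP_inverse_unit (a : Cl2) :
  H a <> 0 -> is_MP_inverse a (cl_scale (/ H a) (cl_bar a)).
Proof.
  intros Hunit; apply is_MP_inverse_inverse.
  - rewrite cl_mul_scale_r, cl_mul_bar_r, cl_scale_scale, Rinv_l by exact Hunit.
    apply cl_scale_1.
  - rewrite cl_mul_scale_l, cl_mul_bar_l, cl_scale_scale, Rinv_l by exact Hunit.
    apply cl_scale_1.
Qed.

Lemma cl_plus_zero : cl_plus cl_zero = cl_zero.
Proof.
  unfold cl_plus, cl_zero; simpl.
  destruct (Req_EM_T 0 0); [reflexivity | contradiction].
Qed.

Lemma cl_plus_nonzero (a : Cl2) :
  a <> cl_zero ->
  cl_plus a = match Req_EM_T (H a) 0 with
              | right _ => cl_scale (/ H a) (cl_bar a)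
              | left _ => cl_scale (/ (4 * (c0 a ^ 2 + c3 a ^ 2))) (cl_prime a)
              end.
Proof.
  intros Hnz; unfold cl_plus.
  destruct (Req_EM_T (c0 a) 0), (Req_EM_T (Defs.c1 a) 0), (Req_EM_T (c2 a) 0),
    (Req_EM_T (c3 a) 0); try reflexivity.
  exfalso; apply Hnz; destruct a; unfold cl_zero; simpl in *; congruence.
Qed.

Theorem theorem3p1 (a : Cl2) : is_MP_inverse a (cl_plus a).
Proof.
  destruct (Cl2_eq_dec a cl_zero) as [-> | Hnz].
  { rewrite cl_plus_zero; exact is_MP_inverse_zero. }
  rewrite (cl_plus_nonzero a Hnz).
  destruct (Req_EM_T (H a) 0) as [Hnull | Hunit].
  - apply is_MP_inverse_scale_prime.
    + exact (null_nonzero_norm_neq0 a Hnull Hnz).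
    + exact (cl_mul_prime_mul_null a Hnull).
  - exact (is_MP_inverse_unit a Hunit).
Qed.
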